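(* Let $X \subseteq \mathbb{Z}^n$ be a closed set, $c \in \mathbb{R}^n$, $Q$ an $n\times n$ symmetric positive semidefinite matrix, and $\Omega > 0$. Define $h:\mathbb{R}^n \times \mathbb{R}_+ \to \mathbb{R}\cup\{+\infty\}$ by $h(x,t) = \frac{x'Qx}{t}$ if $t>0$; $h(x,0) = 0$ if $x'Qx = 0$; and $h(x,0) = +\infty$ otherwise. Let $g(x,t) = c'x + \frac{\Omega}{2}h(x,t) + \frac{\Omega}{2}t$ and $f(t) = \min_{x \in X} g(x,t)$ for $t \ge 0$, and for each $t\ge 0$ let $x(t) \in X$ be a minimizer attaining $f(t)$. If $f$ has a local minimum at $\bar t > 0$, then $$c'x(\bar t) + \Omega\sqrt{x(\bar t)'Qx(\bar t)} = f(\bar t).$$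
   Context: $h$ is the closure of the perspective function of the convex quadratic $q(x)=x'Qx$. The minimum defining $f(t)$ is assumed to be attained, and $x(t)$ denotes a minimizer. *)

From HB Require Import structures.
From mathcomp Require Import all_boot all_order all_algebra.
From mathcomp Require Import reals constructive_ereal.
Set Implicit Arguments. Unset Strict Implicit. Unset Printing Implicit Defensive.
Import Order.TTheory GRing.Theory Num.Theory.
Local Open Scope ring_scope.
Local Open Scope ereal_scope.

Definition qform (R : realType) (n : nat) (Q : 'M[R]_n) (x : 'cV[R]_n) : R :=
  ((x^T *m Q *m x) ord0 ord0)%R.

Definition lform (R : realType) (n : nat) (c x : 'cV[R]_n) : R :=
  ((c^T *m x) ord0 ord0)%R.

Definition psd (R : realType) (n : nat) (Q : 'M[R]_n) : Prop :=
  Q^T = Q /\ forall v : 'cV[R]_n, (0 <= qform Q v)%R.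

Definition int_vec (R : realType) (n : nat) (x : 'cV[R]_n) : Prop :=
  forall i : 'I_n, exists z : int, x i ord0 = (z%:~R)%R.

(* h(x,t): closure of the perspective of q(x)=x'Qx, for t >= 0
   (value +oo for t < 0, outside the domain R^n x R_+) *)
Definition h (R : realType) (n : nat) (Q : 'M[R]_n) (x : 'cV[R]_n) (t : R) : \bar R :=
  if (0 < t)%R then (qform Q x / t)%:E
  else if t == 0%R then (if qform Q x == 0%R then 0 else +oo)
  else +oo.

Definition g (R : realType) (n : nat) (Q : 'M[R]_n) (c : 'cV[R]_n) (Omega : R)
    (x : 'cV[R]_n) (t : R) : \bar R :=
  (lform c x)%:E + (Omega / 2)%:E * h Q x t + (Omega / 2 * t)%:E.

(* Since x(t) minimizes g(., t), f(t) <= g(x(tbar), t) with equality at tbar,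
   so t |-> g(x(tbar), t) = c'x + Omega/2 (q/t + t), with q = x(tbar)'Q x(tbar),
   also has a local minimum at tbar.  Unless tbar^2 = q, moving t slightly from
   tbar towards sqrt q strictly decreases q/t + t; and at tbar = sqrt q the
   value of Omega/2 (q/t + t) is Omega sqrt q. *)
From HB Require Import structures.
From mathcomp Require Import all_boot all_order all_algebra.
From mathcomp Require Import reals constructive_ereal.
From mathcomp Require Import ring lra.
Set Implicit Arguments. Unset Strict Implicit. Unset Printing Implicit Defensive.
Import Order.TTheory GRing.Theory Num.Theory.
Local Open Scope ring_scope.

Lemma perspective_sum_subE (R : fieldType) (q s t : R) : s != 0 -> t != 0 ->
  (q / t + t) - (q / s + s) = (t - s) * (t * s - q) / (t * s).
Proof. by move=> s_neq0 t_neq0; field; rewrite s_neq0 t_neq0. Qed.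

(* [Num.sg (q - s ^+ 2)] is the direction from s towards sqrt q. *)
Lemma perspective_sum_descent (R : realFieldType) (q s d : R) :
  0 < d -> d < s -> s * d < `|q - s ^+ 2| ->
  let t := s + Num.sg (q - s ^+ 2) * d in
  [/\ 0 < t, `|t - s| = d & q / t + t < q / s + s].
Proof.
set k := q - s ^+ 2 => d_gt0 d_lt_s sd_lt_k t.
have s_gt0 : 0 < s by apply: lt_trans d_lt_s.
have k_neq0 : k != 0 by rewrite -normr_gt0; apply: le_lt_trans sd_lt_k; nra.
have dist_t : `|t - s| = d.
  by rewrite addrC addKr normrM normr_sg k_neq0 mul1r gtr0_norm.
have t_gt0 : 0 < t by move: (ler_norm (s - t)); rewrite distrC dist_t; lra.
split=> //.
rewrite -subr_lt0 perspective_sum_subE ?gt_eqF // pmulr_llt0 ?invr_gt0 ?mulr_gt0 //.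
have -> : (t - s) * (t * s - q) = d * (s * d - `|k|).
  rewrite normrEsg /t /k; apply/eqP; rewrite -subr_eq0; apply/eqP.
  transitivity ((Num.sg (q - s ^+ 2) ^+ 2 - 1) * d ^+ 2 * s); first by ring.
  by rewrite sqr_sg k_neq0 subrr !mul0r.
by rewrite pmulr_rlt0 // subr_lt0.
Qed.

Lemma perspective_sum_local_min (R : realFieldType) (q s e : R) :
  0 < s -> 0 < e ->
  (forall t, 0 < t -> `|t - s| < e -> q / s + s <= q / t + t) -> s ^+ 2 = q.
Proof.
move=> s_gt0 e_gt0 locmin; apply/eqP; rewrite eq_sym -subr_eq0.
set k := q - s ^+ 2; apply: contraT => k_neq0.
pose m := Num.min (Num.min e s) (`|k| / s).
have m_gt0 : 0 < m by rewrite !lt_min e_gt0 s_gt0 divr_gt0 ?normr_gt0.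
have [m_le_e m_le_s m_le_ks] : [/\ m <= e, m <= s & m <= `|k| / s].
  by rewrite !ge_min !lexx !orbT.
have sm_le_k : s * m <= `|k| by rewrite mulrC -ler_pdivlMr.
have d_gt0 : 0 < m / 2 by rewrite divr_gt0.
have d_lt_s : m / 2 < s by lra.
have sd_lt_k : s * (m / 2) < `|k| by nra.
have [t_gt0 dist_t descent] := perspective_sum_descent d_gt0 d_lt_s sd_lt_k.
by have := locmin _ t_gt0; rewrite dist_t leNgt descent; apply; lra.
Qed.

Section PerspectiveObjective.
Variables (R : realType) (n : nat) (Q : 'M[R]_n) (c : 'cV[R]_n) (Omega : R).

Lemma g_posE (x : 'cV[R]_n) (t : R) : 0 < t ->
  g Q c Omega x t = (lform c x + Omega / 2 * (qform Q x / t + t))%:E.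
Proof. by move=> t_gt0; rewrite /g /h t_gt0 -EFinM -!EFinD mulrDr addrA. Qed.

Lemma le_g_pos (x : 'cV[R]_n) (s t : R) : 0 < Omega -> 0 < s -> 0 < t ->
  (g Q c Omega x s <= g Q c Omega x t)%E =
  (qform Q x / s + s <= qform Q x / t + t).
Proof.
move=> Omega_gt0 s_gt0 t_gt0.
by rewrite !g_posE // lee_fin lerD2l ler_pM2l ?divr_gt0.
Qed.

End PerspectiveObjective.

Theorem proposition2 (R : realType) (n : nat) (X : 'cV[R]_n -> Prop)
  (c : 'cV[R]_n) (Q : 'M[R]_n) (Omega : R) (xt : R -> 'cV[R]_n) (tbar : R) :
  (forall x, X x -> int_vec x) ->
  psd Q ->
  0 < Omega ->
  (* x(t) is a minimizer of g(., t) over X, for every t >= 0 *)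
  (forall t, 0 <= t -> X (xt t) /\ forall y, X y -> (g Q c Omega (xt t) t <= g Q c Omega y t)%E) ->
  0 < tbar ->
  (* f(t) = g(x(t), t) has a local minimum at tbar (on its domain t >= 0) *)
  (exists eps : R, 0 < eps /\
     forall t, 0 <= t -> `|t - tbar| < eps ->
       (g Q c Omega (xt tbar) tbar <= g Q c Omega (xt t) t)%E) ->
  ((lform c (xt tbar) + Omega * Num.sqrt (qform Q (xt tbar)))%:E
     = g Q c Omega (xt tbar) tbar)%E.
Proof.
move=> _ _ Omega_gt0 xt_min tbar_gt0 [eps [eps_gt0 f_locmin]].
have [X_xtbar _] := xt_min tbar (ltW tbar_gt0).
have tbar_sq : tbar ^+ 2 = qform Q (xt tbar).
  apply: (perspective_sum_local_min tbar_gt0 eps_gt0) => t t_gt0 t_near.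
  rewrite -(le_g_pos Q c (xt tbar) Omega_gt0 tbar_gt0 t_gt0).
  apply: le_trans (f_locmin t (ltW t_gt0) t_near) _.
  exact: (xt_min t (ltW t_gt0)).2 _ X_xtbar.
rewrite g_posE // -tbar_sq sqrtr_sqr gtr0_norm //; congr (_ + _)%:E.
by field; rewrite gt_eqF.
Qed.
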